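(* Let $n>3$ be odd. Let $H_n$ be the bipartite graph with vertex classes $A=\{a_0,\dots,a_{n-1}\}$ and $B=\{b_0,\dots,b_{n-1}\}$ whose edge set is $M_0\cup M_1\cup M_2$, where $M_j=\{a_ib_{i+j}: 0\le i\le n-1\}$ with indices modulo $n$. Then $H_n$ is $3$-regular, for any two distinct $j,j'\in\{0,1,2\}$ the graph $M_j\cup M_{j'}$ is a Hamilton cycle of $H_n$, and $m(H_n)=4$.
   Context: All graphs are finite and simple. For graphs $G_1=(V,E_1)$, $G_2=(V,E_2)$, their symmetric difference is $(V,E_1\oplus E_2)$, where $E_1\oplus E_2$ is the set of edges in exactly one of $E_1,E_2$. A connectivity code for $H=(V,E)$ is a collection of distinct spanning subgraphs $(V,E')$, $E'\subseteq E$, such that the symmetric difference of any two distinct members is a connected graph on $V$; $m(H)$ is the maximum cardinality of a connectivity code for $H$. *)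

From mathcomp Require Import all_boot.
Set Implicit Arguments. Unset Strict Implicit. Unset Printing Implicit Defensive.

(* A simple graph on a finite vertex type V is given by its edge set
   E : {set {set V}}, every edge being a 2-element subset of V.
   Spanning subgraphs (V, E') are identified with their edge sets E'. *)

Section Graphs.
Variable V : finType.

Definition adj (E : {set {set V}}) : rel V := fun x y => [set x; y] \in E.

Definition deg (E : {set {set V}}) (v : V) : nat := #|[set e in E | v \in e]|.

Definition regular (k : nat) (E : {set {set V}}) : bool :=
  [forall v : V, deg E v == k].

Definition connectedb (E : {set {set V}}) : bool :=
  [forall u : V, forall v : V, connect (adj E) u v].

Definition symdiff (E1 E2 : {set {set V}}) : {set {set V}} :=
  (E1 :\: E2) :|: (E2 :\: E1).

Definition is_conn_code (E : {set {set V}}) (C : {set {set {set V}}}) : bool :=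
  [forall F in C, F \subset E] &&
  [forall F1 in C, forall F2 in C, (F1 != F2) ==> connectedb (symdiff F1 F2)].

Definition m_code (E : {set {set V}}) : nat :=
  \max_(C : {set {set {set V}}} | is_conn_code E C) #|C|.

Definition hamilton_cycle (E F : {set {set V}}) : Prop :=
  F \subset E /\
  exists s : seq V, [/\ uniq s, forall v : V, v \in s, 3 <= size s &
    F = [set [set x; next s x] | x in s]].

End Graphs.

Definition ord_addn (n : nat) (i : 'I_n) (j : nat) : 'I_n :=
  Ordinal (ltn_pmod (i + j) (leq_ltn_trans (leq0n i) (ltn_ord i))).

(* vertices of H_n: inl i = a_i, inr i = b_i *)
Definition HV (n : nat) : finType := ('I_n + 'I_n)%type.

Definition Mj (n j : nat) : {set {set HV n}} :=
  [set [set (inl i : HV n); inr (ord_addn i j)] | i : 'I_n].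

Definition HE (n : nat) : {set {set HV n}} := Mj n 0 :|: Mj n 1 :|: Mj n 2.

From mathcomp Require Import all_boot zify.
Set Implicit Arguments. Unset Strict Implicit. Unset Printing Implicit Defensive.

(* Regularity: M_0, M_1, M_2 are edge-disjoint perfect matchings, so every
   degree is 1 + 1 + 1.
   Hamilton cycles: for j < j', starting at a_0 and alternately following an
   M_j' edge and an M_j edge visits a_0, a_d, a_2d, ... with d = j' - j; as d
   is 1 or 2 and n is odd, d is invertible modulo n and the walk is a Hamilton
   cycle (lemma walk_hamilton turns such a walk into a Hamilton cycle).
   m(H_n) >= 4: for pairwise disjoint A, B, C with connected pairwise unions,
   {empty, A u B, A u C, B u C} is a connectivity code (union_code), and the
   unions M_j u M_j' are connected, being Hamilton cycles.
   m(H_n) <= 4: a connected graph on V has at least |V| - 1 edges (spanning-tree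
   injection), so five code members would give ten symmetric differences with
   at least 10 (2n - 1) + 1 edges (the +1 by a parity argument), while a
   double count bounds their total size by 6 |E(H_n)| = 18 n < 20 n - 9
   when n >= 5 (conn_code_card_le4). *)

(* A connected graph has at least |V| - 1 edges: orient every vertex but a root
   r towards a neighbour strictly closer to r; these edges are distinct. *)
Section SpanningTree.
Variables (V : finType) (E : {set {set V}}) (r : V).
Hypothesis connE : connectedb E.

Let walk_to_root (v : V) (k : nat) : bool :=
  [exists p : k.-tuple V, path (adj E) v p && (last v p == r)].

Let walk_to_root_ex (v : V) : exists k, walk_to_root v k.
Proof.
have /connectP [p pv lp] := forallP (forallP connE v) r.
by exists (size p); apply/existsP; exists (in_tuple p); rewrite /= pv -lp eqxx.
Qed.

Definition rdist (v : V) : nat := ex_minn (walk_to_root_ex v).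

Lemma rdist_descent v : v != r -> exists w, adj E v w && (rdist w < rdist v).
Proof.
move=> vr; rewrite {2}/rdist; case: ex_minnP => k /existsP [[p /eqP sp]] /=.
case: p sp => [|w p] sp /=; first by move=> /eqP vE; rewrite vE eqxx in vr.
case/andP=> /andP [vw pw] lw _; exists w; rewrite vw /rdist /=.
case: ex_minnP => k' _ /(_ (size p)) min'; rewrite -sp ltnS min' //.
by apply/existsP; exists (in_tuple p); rewrite /= pw lw.
Qed.

Definition parent_edge (v : V) : {set V} :=
  [set v; odflt v [pick w | adj E v w && (rdist w < rdist v)]].

Lemma parent_edgeP v : v != r ->
  exists2 w, parent_edge v = [set v; w] & adj E v w && (rdist w < rdist v).
Proof.
move=> vr; rewrite /parent_edge; case: pickP => [w wP | none] /=; first by exists w.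
by have [w] := rdist_descent vr; rewrite none.
Qed.

Lemma parent_edge_inj : {in [set~ r] &, injective parent_edge}.
Proof.
move=> v v'; rewrite !inE => vr v'r.
have [w -> /andP [_ dw]] := parent_edgeP vr.
have [w' -> /andP [_ dw'] eq_vv'] := parent_edgeP v'r.
case: (eqVneq v v') => // neq_vv'.
have /set2P [/eqP|vw'] : v \in [set v'; w'] by rewrite -eq_vv' set21.
  by rewrite (negbTE neq_vv').
have /set2P [/eqP|v'w] : v' \in [set v; w] by rewrite eq_vv' set21.
  by rewrite eq_sym (negbTE neq_vv').
by move: dw dw'; rewrite -vw' -v'w => /ltn_trans h /h; rewrite ltnn.
Qed.

Lemma card_le_edges_root : #|V| <= #|E|.+1.
Proof.
have sub : parent_edge @: [set~ r] \subset E.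
  apply/subsetP => e /imsetP [v]; rewrite !inE => vr ->.
  by have [w -> /andP []] := parent_edgeP vr.
rewrite -cardsT (cardsD1 r) in_setT add1n ltnS setTD -(card_in_imset parent_edge_inj).
exact: subset_leq_card.
Qed.

End SpanningTree.

Lemma connected_card_edges (V : finType) (E : {set {set V}}) :
  connectedb E -> #|V| <= #|E|.+1.
Proof.
case: (pickP (@predT V)) => [r _ | empty]; first exact: card_le_edges_root.
by move=> _; rewrite (@eq_card0 _ V) // => x; rewrite /= empty.
Qed.

Lemma deg_setU (V : finType) (E1 E2 : {set {set V}}) v :
  [disjoint E1 & E2] -> deg (E1 :|: E2) v = deg E1 v + deg E2 v.
Proof.
move=> dE; rewrite /deg; apply/eqP.
have -> : [set e in E1 :|: E2 | v \in e] =
    [set e in E1 | v \in e] :|: [set e in E2 | v \in e].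
  by apply/setP => e; rewrite !inE andb_orl.
rewrite (leq_card_setU _ _).2 (disjointWl _ (disjointWr _ dE)) //;
  by apply/subsetP => e; rewrite inE => /andP [].
Qed.

Lemma hamilton_connected (V : finType) (E F : {set {set V}}) :
  hamilton_cycle E F -> connectedb F.
Proof.
case=> _ [s [uniq_s all_s _ ->]].
have cyc : cycle (adj [set [set x; next s x] | x in s]) s.
  by apply: cycle_from_next => // x xs; apply: imset_f.
by apply/forallP => u; apply/forallP => v; apply: connect_cycle cyc _ _ (all_s u) (all_s v).
Qed.

Lemma next_mkseq (V : eqType) (g : nat -> V) N k :
  uniq (mkseq g N) -> g N = g 0 -> k < N -> next (mkseq g N) (g k) = g k.+1.
Proof.
case: N => // N uniq_g period lt_kN.
have gk : g k \in mkseq g N.+1 by rewrite -(nth_mkseq (g 0) g lt_kN) mem_nth ?size_mkseq.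
have idx : index (g k) (mkseq g N.+1) = k.
  by rewrite -{1}(nth_mkseq (g 0) g lt_kN) index_uniq ?size_mkseq.
rewrite next_nth gk idx /=; case: (ltnP k N) => [lt_kN' | le_Nk].
  by rewrite /mkseq -addn1 iotaDl -map_comp (nth_map 0) ?size_iota // nth_iota // addn1.
have -> : k = N by lia.
by rewrite period nth_default ?size_map ?size_iota.
Qed.

Lemma walk_hamilton (V : finType) (E : {set {set V}}) (g : nat -> V) N :
  2 < N -> g N = g 0 -> {in gtn N &, injective g} ->
  (forall v, exists2 k, k < N & g k = v) ->
  [set [set g k; g k.+1] | k : 'I_N] \subset E ->
  hamilton_cycle E [set [set g k; g k.+1] | k : 'I_N].
Proof.
move=> N_gt2 period g_inj g_onto sub; split=> //; exists (mkseq g N).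
have mem_g k : (k \in iota 0 N) = (k < N) by rewrite mem_iota.
have uniq_s : uniq (mkseq g N).
  by rewrite map_inj_in_uniq ?iota_uniq // => k k'; rewrite !mem_g; apply: g_inj.
split=> //.
- by move=> v; have [k lt_kN <-] := g_onto v; apply: map_f; rewrite mem_g.
- by rewrite size_mkseq.
apply/setP => e; apply/imsetP/imsetP => [[k _ ->] | [x /mapP [k]]].
  by exists (g k); [apply: map_f; rewrite mem_g | rewrite next_mkseq].
by rewrite mem_g => lt_kN -> ->; exists (Ordinal lt_kN); rewrite ?next_mkseq.
Qed.

Section Counting.
Variable V : finType.
Implicit Types E F : {set {set V}}.

Lemma card_symdiff F1 F2 :
  #|symdiff F1 F2| = \sum_(e : {set V}) ((e \in F1) (+) (e \in F2)).
Proof.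
rewrite -sum1_card big_mkcond /=; apply: eq_bigr => e _.
by rewrite /symdiff !inE; case: (e \in F1); case: (e \in F2).
Qed.

(* Among five edge sets inside E, each edge of E separates at most 2 * 3 of the
   ten pairs, so the ten symmetric differences have at most 6 |E| edges in total. *)
Lemma symdiff_sum_five E F1 F2 F3 F4 F5 :
  F1 \subset E -> F2 \subset E -> F3 \subset E -> F4 \subset E -> F5 \subset E ->
  #|symdiff F1 F2| + #|symdiff F1 F3| + #|symdiff F2 F3| + #|symdiff F1 F4| +
  #|symdiff F1 F5| + #|symdiff F2 F4| + #|symdiff F2 F5| + #|symdiff F3 F4| +
  #|symdiff F3 F5| + #|symdiff F4 F5| <= 6 * #|E|.
Proof.
move=> /subsetP s1 /subsetP s2 /subsetP s3 /subsetP s4 /subsetP s5.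
rewrite !card_symdiff -!big_split -sum1_card big_distrr [X in _ <= X]big_mkcond /=.
apply: leq_sum => e _; case: ifP => [_ | /negbT eE].
  by case: (e \in F1); case: (e \in F2); case: (e \in F3); case: (e \in F4);
    case: (e \in F5).
by rewrite !(contraNF (s1 e), contraNF (s2 e), contraNF (s3 e), contraNF (s4 e),
  contraNF (s5 e)).
Qed.

(* Every edge separates an even number of the three pairs among three sets. *)
Lemma symdiff_sum_three_even F1 F2 F3 :
  ~~ odd (#|symdiff F1 F2| + #|symdiff F1 F3| + #|symdiff F2 F3|).
Proof.
rewrite !card_symdiff -!big_split /=.
elim/big_ind: _ => // [x y ex ey | e _]; first by rewrite oddD (negbTE ex) (negbTE ey).
by case: (e \in F1); case: (e \in F2); case: (e \in F3).
Qed.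

Lemma conn_code_far E C F1 F2 : is_conn_code E C ->
  F1 \in C -> F2 \in C -> F1 != F2 -> #|V| <= #|symdiff F1 F2|.+1.
Proof.
case/andP=> _ /forall_inP code F1C F2C neq.
exact/connected_card_edges/(implyP (forall_inP (code _ F1C) _ F2C)).
Qed.

(* A graph with a positive even number of vertices and at most 5/3 (|V| - 1) edges has no
   connectivity code with five members: their ten pairwise symmetric differences
   would need at least 10 (|V| - 1) + 1 edges (the +1 by parity), but have at most
   6 |E| <= 10 (|V| - 1). *)
Lemma conn_code_card_le4 E C : 0 < #|V| -> ~~ odd #|V| ->
  3 * #|E| <= 5 * #|V|.-1 -> is_conn_code E C -> #|C| <= 4.
Proof.
move=> V_gt0 even_V few_edges code; rewrite leqNgt; apply/negP => C_gt4.
have /andP [/forall_inP sub _] := code.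
pose F k := nth set0 (enum C) k.
have FC k : k < 5 -> F k \in C.
  by move=> lt_k5; rewrite -mem_enum mem_nth // -cardE (leq_trans lt_k5).
have far k k' : k < 5 -> k' < 5 -> k != k' -> #|V| <= #|symdiff (F k) (F k')|.+1.
  move=> lt_k5 lt_k'5 neq; apply: (conn_code_far code (FC k lt_k5) (FC k' lt_k'5)).
  by rewrite nth_uniq ?enum_uniq // -cardE (leq_trans _ C_gt4).
have := symdiff_sum_five (sub _ (FC 0 isT)) (sub _ (FC 1 isT)) (sub _ (FC 2 isT))
  (sub _ (FC 3 isT)) (sub _ (FC 4 isT)).
have := odd_double_half (#|symdiff (F 0) (F 1)| + #|symdiff (F 0) (F 2)| +
  #|symdiff (F 1) (F 2)|); rewrite (negbTE (symdiff_sum_three_even _ _ _)).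
have := odd_double_half #|V|; rewrite (negbTE even_V).
have := far 0 1 isT isT isT; have := far 0 2 isT isT isT; have := far 1 2 isT isT isT.
have := far 0 3 isT isT isT; have := far 0 4 isT isT isT; have := far 1 3 isT isT isT.
have := far 1 4 isT isT isT; have := far 2 3 isT isT isT; have := far 2 4 isT isT isT.
have := far 3 4 isT isT isT.
lia.
Qed.

End Counting.

Section UnionCode.
Variables (V : finType) (A B C : {set {set V}}).
Hypotheses (dAB : [disjoint A & B]) (dAC : [disjoint A & C]) (dBC : [disjoint B & C]).

Definition union_code : {set {set {set V}}} := [set set0; A :|: B; A :|: C; B :|: C].

Lemma at_most_one_block e :
  ~~ [|| (e \in A) && (e \in B), (e \in A) && (e \in C) | (e \in B) && (e \in C)].
Proof.
case eA: (e \in A); first by rewrite (disjointFr dAB eA) (disjointFr dAC eA).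
by case eB: (e \in B); rewrite // (disjointFr dBC eB).
Qed.

Ltac by_blocks := apply/eqP/setP; let e := fresh "e" in move=> e;
  rewrite /symdiff !inE; move: (at_most_one_block e);
  by case: (e \in A); case: (e \in B); case: (e \in C).

Lemma symdiff_union_code X Y : X \in union_code -> Y \in union_code -> X != Y ->
  symdiff X Y \in [set A :|: B; A :|: C; B :|: C].
Proof.
rewrite !inE -!orbA => /or4P [] /eqP -> /or4P [] /eqP -> //; rewrite ?eqxx // => _.
all: apply/or3P;
  first [apply: Or31; by_blocks | apply: Or32; by_blocks | apply: Or33; by_blocks].
Qed.

Lemma card_union_code : A != set0 -> B != set0 -> #|union_code| = 4.
Proof.
move=> /set0Pn [a aA] /set0Pn [b bB].
have sep (X Y : {set {set V}}) x : x \in X -> x \notin Y -> X != Y.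
  by move=> xX; apply: contraNneq => <-.
have aB := disjointFr dAB aA; have aC := disjointFr dAC aA.
have bA := disjointFl dAB bB; have bC := disjointFr dBC bB.
have -> : #|union_code| = #|[:: set0; A :|: B; A :|: C; B :|: C]|.
  by apply: eq_card => X; rewrite !inE -!orbA.
have n1 : set0 != A :|: B by rewrite eq_sym (sep _ _ a) ?inE ?aA.
have n2 : set0 != A :|: C by rewrite eq_sym (sep _ _ a) ?inE ?aA.
have n3 : set0 != B :|: C by rewrite eq_sym (sep _ _ b) ?inE ?bB.
have n4 : A :|: B != A :|: C by rewrite (sep _ _ b) ?inE ?bB ?bA ?bC.
have n5 : A :|: B != B :|: C by rewrite (sep _ _ a) ?inE ?aA ?aB ?aC.
have n6 : A :|: C != B :|: C by rewrite (sep _ _ a) ?inE ?aA ?aB ?aC.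
by apply/card_uniqP; rewrite /= !inE !negb_or n1 n2 n3 n4 n5 n6.
Qed.

Lemma union_code_conn_code (E : {set {set V}}) :
  A \subset E -> B \subset E -> C \subset E ->
  connectedb (A :|: B) -> connectedb (A :|: C) -> connectedb (B :|: C) ->
  is_conn_code E union_code.
Proof.
move=> sA sB sC cAB cAC cBC; apply/andP; split.
  apply/forall_inP => X; rewrite !inE -!orbA => /or4P [] /eqP ->;
    by rewrite ?sub0set // subUset ?sA ?sB ?sC.
apply/forall_inP => X XC; apply/forall_inP => Y YC; apply/implyP => neq.
by move: (symdiff_union_code XC YC neq); rewrite !inE -!orbA => /or3P [] /eqP ->.
Qed.
End UnionCode.

Lemma m_code_eq (V : finType) (E : {set {set V}}) k :
  (exists2 C, is_conn_code E C & #|C| = k) ->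
  (forall C, is_conn_code E C -> #|C| <= k) -> m_code E = k.
Proof.
move=> [C code <-] bound; apply/eqP; rewrite eqn_leq.
by rewrite (bigmax_sup C) // andbT; apply/bigmax_leqP => C' /bound.
Qed.

Section Hn.
Variable n : nat.
Hypothesis n_gt2 : 2 < n.

Lemma n_gt0 : 0 < n. Proof. exact: ltn_trans n_gt2. Qed.

Definition modI (x : nat) : 'I_n := Ordinal (ltn_pmod x n_gt0).

Lemma modI_congr x y : x = y %[mod n] -> modI x = modI y.
Proof. by move=> exy; apply: val_inj. Qed.

Lemma modI_val (i : 'I_n) : modI i = i.
Proof. by apply: val_inj; rewrite /= modn_small. Qed.

Definition edge (x j : nat) : {set HV n} := [set inl (modI x); inr (modI (x + j))].

Lemma edge_congr x y j : x = y %[mod n] -> edge x j = edge y j.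
Proof.
move=> exy; rewrite /edge (modI_congr exy) (@modI_congr (x + j) (y + j)) //.
by rewrite -modnDml exy modnDml.
Qed.

Lemma edge_inj x y j k :
  edge x j = edge y k -> x = y %[mod n] /\ x + j = y + k %[mod n].
Proof.
move=> exy; have /set2P [[ex] | //] : inl (modI x) \in edge y k.
  by rewrite -exy set21.
have /set2P [// | [exj]] : inr (modI (x + j)) \in edge y k.
  by rewrite -exy set22.
by split.
Qed.

Lemma MjE j : Mj n j = [set edge i j | i : 'I_n].
Proof.
apply: eq_imset => i; rewrite /edge modI_val; congr [set _; inr _].
exact: val_inj.
Qed.

Lemma edge_in x j : edge x j \in Mj n j.
Proof.
rewrite (@edge_congr x (modI x)); first by rewrite MjE; apply: imset_f.
by rewrite /= modn_mod.
Qed.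

Lemma MjP j e : e \in Mj n j -> exists x, e = edge x j.
Proof. by rewrite MjE => /imsetP [i _ ->]; exists i. Qed.

(* M_0, M_1, M_2 are pairwise edge-disjoint since 0, 1, 2 are distinct modulo n. *)
Lemma Mj_disjoint a b : a < 3 -> b < 3 -> a != b -> [disjoint Mj n a & Mj n b].
Proof.
move=> a3 b3 neq_ab; apply/pred0P => e /=; apply/negbTE/negP.
case/andP => /MjP [x ->] /MjP [y /edge_inj [exy]].
rewrite -modnDml exy modnDml => /eqP; rewrite eqn_modDl !modn_small;
  try exact: leq_trans n_gt2.
by move/eqP => eq_ab; rewrite eq_ab eqxx in neq_ab.
Qed.

Lemma addn_mod_inv y j : y + j + j * n.-1 = y %[mod n].
Proof.
by rewrite -addnA addnC [j + _]addnC -mulnSr prednK ?n_gt0 // modnMDl.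
Qed.

Lemma deg_Mj j v : deg (Mj n j) v = 1.
Proof.
pose x := if v is inl i then val i else if v is inr b then b + j * n.-1 else 0.
rewrite /deg -(cards1 (edge x j)); apply: eq_card => e.
rewrite !inE; apply/andP/eqP => [[/MjP [y ->]] | ->]; last first.
  split; first exact: edge_in.
  case: v @x => [i | b] /=; first by rewrite /edge modI_val set21.
  rewrite /edge; suff -> : modI (b + j * n.-1 + j) = b by rewrite set22.
  by apply/val_inj; rewrite /= addnAC addn_mod_inv modn_small.
case: v @x => [i | b] /= /set2P [] // [eyv]; apply: edge_congr.
  by rewrite eyv /= modn_mod.
by rewrite eyv /= modnDml addn_mod_inv.
Qed.

Lemma regular_HE : regular 3 (HE n).
Proof.
apply/forallP => v; rewrite /HE !deg_setU ?deg_Mj ?Mj_disjoint //.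
by rewrite -setI_eq0 setIUl !disjoint_setI0 ?Mj_disjoint ?setU0.
Qed.

Lemma card_HV : #|HV n| = n.*2.
Proof. by rewrite card_sum card_ord addnn. Qed.

Lemma card_HE : #|HE n| <= 3 * n.
Proof.
have card_Mj j : #|Mj n j| <= n by rewrite -[n in _ <= n]card_ord leq_imset_card.
rewrite /HE (leq_trans (leq_card_setU _ _)) //.
rewrite (leq_trans (leq_add (leq_card_setU _ _) (card_Mj 2))) //.
by have := card_Mj 0; have := card_Mj 1; lia.
Qed.

Lemma Mj_sub_HE a : a < 3 -> Mj n a \subset HE n.
Proof.
by rewrite /HE; case: a => [|[|[|]]] // _; apply/subsetP => e; rewrite !inE => ->;
  rewrite ?orbT.
Qed.

Section Walk.
Variables j d : nat.
Hypothesis coprime_dn : coprime d n.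

Lemma mul_inj t t' : t < n -> t' < n -> t * d = t' * d %[mod n] -> t = t'.
Proof.
wlog le_tt' : t t' / t <= t'.
  by move=> W lt lt' eq; case: (leqP t t') => [|/ltnW] le; [|apply/esym]; apply: W.
move=> _ lt_t'n /eqP; rewrite eq_sym eqn_mod_dvd ?leq_mul2r ?le_tt' ?orbT //.
rewrite -mulnBl Gauss_dvdl 1?coprime_sym // => /dvdn_leq.
lia.
Qed.

Lemma mul_onto x : exists2 t, t < n & t * d = x %[mod n].
Proof.
have inj : injective (fun t : 'I_n => modI (t * d)).
  by move=> t t' /(congr1 val) /= /mul_inj eq; apply/val_inj/eq.
exists (invF inj (modI x)) => //.
by have /(congr1 val) := f_invF inj (modI x).
Qed.

(* The closed walk a_0, b_(j+d), a_d, b_(d+j+d), a_2d, ... which alternates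
   between edges of M_(j+d) and of M_j. *)
Definition walk (k : nat) : HV n :=
  if odd k then inr (modI (k./2 * d + (j + d))) else inl (modI (k./2 * d)).

Lemma walk_even t : walk t.*2 = inl (modI (t * d)).
Proof. by rewrite /walk odd_double doubleK. Qed.

Lemma walk_odd t : walk t.*2.+1 = inr (modI (t * d + (j + d))).
Proof. by rewrite /walk /= odd_double uphalf_double. Qed.

Lemma walk_edge_even t : [set walk t.*2; walk t.*2.+1] = edge (t * d) (j + d).
Proof. by rewrite walk_even walk_odd. Qed.

Lemma walk_edge_odd t : [set walk t.*2.+1; walk t.*2.+2] = edge (t.+1 * d) j.
Proof. by rewrite -doubleS walk_even walk_odd setUC /edge mulSnr -addnA (addnC d). Qed.

Lemma walk_period : walk n.*2 = walk 0.
Proof.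
by rewrite -double0 !walk_even; congr inl; apply: modI_congr; rewrite modnMr mod0n.
Qed.

Lemma half_split k : k < n.*2 -> exists2 t, t < n & k = t.*2 \/ k = t.*2.+1.
Proof.
move=> lt_k; exists k./2; first by rewrite ltn_half_double.
by rewrite -{1 3}(odd_double_half k); case: (odd k); [right | left].
Qed.

Lemma walk_inj : {in gtn n.*2 &, injective walk}.
Proof.
move=> k k' /half_split [t lt_t [] -> ] /half_split [t' lt_t' [] ->];
  rewrite ?walk_even ?walk_odd // => -[/eqP].
all: by rewrite ?eqn_modDr => /eqP /(mul_inj lt_t lt_t') ->.
Qed.

Lemma walk_onto v : exists2 k, k < n.*2 & walk k = v.
Proof.
case: v => [i | b].
  have [t lt_t td] := mul_onto i; exists t.*2; first by rewrite ltn_double.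
  by rewrite walk_even -[i in RHS]modI_val; congr inl; apply: modI_congr.
have [t lt_t td] := mul_onto (b + (j + d) * n.-1).
exists t.*2.+1; first by rewrite -doubleS leq_double.
rewrite walk_odd -[b in RHS]modI_val; congr inr; apply: modI_congr.
by rewrite -modnDml td modnDml addnAC addn_mod_inv.
Qed.

Lemma walk_edges :
  Mj n j :|: Mj n (j + d) = [set [set walk k; walk k.+1] | k : 'I_n.*2].
Proof.
apply/setP => e; apply/idP/imsetP => [|[k _ ->]]; last first.
  have [t lt_t [] ->] := half_split (ltn_ord k).
    by rewrite walk_edge_even inE edge_in orbT.
  by rewrite walk_edge_odd inE edge_in.
rewrite inE => /orP [] /MjP [x ->].
  have [t lt_t td] := mul_onto (x + d * n.-1).
  have lt_k : t.*2.+1 < n.*2 by rewrite -doubleS leq_double.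
  exists (Ordinal lt_k) => //=; rewrite walk_edge_odd; apply: edge_congr.
  by rewrite mulSnr -modnDml td modnDml addnAC addn_mod_inv.
have [t lt_t td] := mul_onto x.
have lt_k : t.*2 < n.*2 by rewrite ltn_double.
by exists (Ordinal lt_k) => //=; rewrite walk_edge_even; apply: edge_congr.
Qed.

Lemma Mj_pair_hamilton : j + d < 3 -> hamilton_cycle (HE n) (Mj n j :|: Mj n (j + d)).
Proof.
move=> lt_jd3; rewrite walk_edges; apply: walk_hamilton.
- by rewrite -addnn ltn_addr.
- exact: walk_period.
- exact: walk_inj.
- exact: walk_onto.
by rewrite -walk_edges subUset !Mj_sub_HE // (leq_ltn_trans (leq_addr d j)).
Qed.

End Walk.
End Hn.

(* For odd n > 2, any two of M_0, M_1, M_2 form a Hamilton cycle of H_n: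
   the step between them is 1 or 2, both invertible modulo an odd n. *)
Lemma Mj_union_hamilton n j j' : 2 < n -> odd n -> j < 3 -> j' < 3 -> j != j' ->
  hamilton_cycle (HE n) (Mj n j :|: Mj n j').
Proof.
move=> n_gt2 odd_n; wlog lt_jj' : j j' / j < j'.
  move=> W j3 j'3; case: ltngtP => // [lt_jj' | lt_j'j] _.
    by apply: W; rewrite // neq_ltn lt_jj'.
  by rewrite setUC; apply: W; rewrite // neq_ltn lt_j'j.
have cop1 : coprime 1 n := coprime1n n.
have cop2 : coprime 2 n by rewrite coprime2n.
case: j lt_jj' => [|[|[|]]] //; case: j' => [|[|[|]]] // _ _ _ _.
- exact: (Mj_pair_hamilton n_gt2 (j := 0) cop1).
- exact: (Mj_pair_hamilton n_gt2 (j := 0) cop2).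
- exact: (Mj_pair_hamilton n_gt2 (j := 1) cop1).
Qed.

Theorem mainTheorem14 (n : nat) (hn : 3 < n) (hodd : odd n) :
  [/\ regular 3 (HE n),
      (forall j j' : nat, j < 3 -> j' < 3 -> j != j' ->
         hamilton_cycle (HE n) (Mj n j :|: Mj n j')) &
      m_code (HE n) = 4].
Proof.
have n_gt2 : 2 < n := ltnW hn.
have conn j j' : j < 3 -> j' < 3 -> j != j' -> connectedb (Mj n j :|: Mj n j').
  by move=> j3 j'3 neq; apply/hamilton_connected/Mj_union_hamilton.
have Mj_nonempty j : Mj n j != set0.
  by apply/set0Pn; exists (edge n_gt2 0 j); apply: edge_in.
split; [exact: regular_HE | by move=> *; apply: Mj_union_hamilton |].
apply: m_code_eq.
  exists (union_code (Mj n 0) (Mj n 1) (Mj n 2)).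
    by apply: union_code_conn_code; rewrite ?Mj_disjoint ?Mj_sub_HE ?conn.
  by rewrite card_union_code ?Mj_disjoint.
have n_gt4 : 4 < n by move: hn hodd; rewrite leq_eqVlt => /orP [/eqP <- | ].
move=> C; apply: conn_code_card_le4; rewrite card_HV ?odd_double ?double_gt0 //.
  exact: n_gt0 n_gt2.
by have := card_HE n_gt2; rewrite -muln2; lia.
Qed.
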